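(* A set of pairwise disjoint convex polygons in $\mathbb{R}^2$ cannot always be reconstructed from a set of markers containing at least one marker per edge: there exist two distinct finite sets $S\neq S'$ of pairwise disjoint convex polygons and a finite set $\mathcal{M}$ of point-normal markers such that both $S$ and $S'$ are fully consistent with $\mathcal{M}$.
   Context: A point-normal marker in the plane is a pair $(p,n)$ with $p\in\mathbb{R}^2$ and $n$ a unit vector. A marker $(p,n)$ is on and aligned with an edge $e$ of a polygon $Q$ if $p\in e$ and $n$ is the outward unit normal of $Q$ along $e$. A set of polygons is consistent with a set of markers if every marker is on and aligned with an edge of one of the polygons; it is fully consistent if moreover every edge of every polygon in the set has at least one marker on and aligned with it. *)

From Stdlib Require Import Reals Lra List.
Import ListNotations.
Open Scope R_scope.

Definition point : Type := (R * R)%type.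

(* Orientation (twice the signed area) of the triangle a b c. *)
Definition orient (a b c : point) : R :=
  (fst b - fst a) * (snd c - snd a) - (snd b - snd a) * (fst c - fst a).

(* A convex polygon is given by its list of vertices in counterclockwise
   order, with at least 3 vertices, strictly convex: every vertex not on the
   directed edge v_i -> v_{i+1} lies strictly to its left. *)
Definition vtx (vs : list point) (i : nat) : point := nth i vs (0, 0).
Definition nxt (vs : list point) (i : nat) : nat := Nat.modulo (S i) (length vs).

Definition convex_polygon (vs : list point) : Prop :=
  (3 <= length vs)%nat /\
  forall i j, (i < length vs)%nat -> (j < length vs)%nat ->
    j <> i -> j <> nxt vs i ->
    0 < orient (vtx vs i) (vtx vs (nxt vs i)) (vtx vs j).

Definition in_polygon (vs : list point) (p : point) : Prop :=
  forall i, (i < length vs)%nat -> 0 <= orient (vtx vs i) (vtx vs (nxt vs i)) p.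

Definition on_segment (a b p : point) : Prop :=
  exists t, 0 <= t <= 1 /\
    p = ((1 - t) * fst a + t * fst b, (1 - t) * snd a + t * snd b).

(* Outward unit normal of the directed edge a -> b of a counterclockwise
   polygon (interior on the left). *)
Definition outward_normal (a b : point) : point :=
  let dx := fst b - fst a in
  let dy := snd b - snd a in
  let L := sqrt (dx * dx + dy * dy) in
  (dy / L, - dx / L).

Definition unit_vector (n : point) : Prop := fst n * fst n + snd n * snd n = 1.

(* A point-normal marker (p, n). *)
Definition marker : Type := (point * point)%type.

Definition on_aligned_edge (m : marker) (vs : list point) (i : nat) : Prop :=
  (i < length vs)%nat /\
  on_segment (vtx vs i) (vtx vs (nxt vs i)) (fst m) /\
  snd m = outward_normal (vtx vs i) (vtx vs (nxt vs i)).

Definition same_polygon (P Q : list point) : Prop :=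
  forall p, in_polygon P p <-> in_polygon Q p.

(* Finite set of pairwise disjoint convex polygons (represented by a list;
   two members are either the same polygon or have disjoint regions). *)
Definition disjoint_convex_family (S : list (list point)) : Prop :=
  (forall P, In P S -> convex_polygon P) /\
  (forall P Q, In P S -> In Q S ->
     (exists p, in_polygon P p /\ in_polygon Q p) -> same_polygon P Q).

Definition same_family (S S' : list (list point)) : Prop :=
  (forall P, In P S -> exists Q, In Q S' /\ same_polygon P Q) /\
  (forall Q, In Q S' -> exists P, In P S /\ same_polygon P Q).

Definition consistent (S : list (list point)) (M : list marker) : Prop :=
  forall m, In m M -> exists P i, In P S /\ on_aligned_edge m P i.

Definition fully_consistent (S : list (list point)) (M : list marker) : Prop :=
  consistent S M /\
  (forall P i, In P S -> (i < length P)%nat ->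
     exists m, In m M /\ on_aligned_edge m P i).

From Stdlib Require Import Reals Lra Lia List.
Import ListNotations.
Open Scope R_scope.

(* Nine markers determine nine oriented lines, and the arrangement of these
   lines contains two different triples of pairwise disjoint triangles whose
   edges run along exactly these lines, with the prescribed orientation and
   through the marker points.  A marker lies on an edge as soon as it is
   collinear with it and its normal comes from a positively parallel edge,
   so every check reduces to linear arithmetic on explicit coordinates. *)

Definition dot (u v : point) : R := fst u * fst v + snd u * snd v.
Definition cross (u v : point) : R := fst u * snd v - snd u * fst v.
Definition vsub (b a : point) : point := (fst b - fst a, snd b - snd a).

Lemma dot_self_pos (u v : point) : 0 < dot u v -> 0 < dot u u.
Proof.
  unfold dot; intros H.
  destruct (Req_dec (fst u) 0) as [Hx|Hx]; [destruct (Req_dec (snd u) 0) as [Hy|Hy]|].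
  - rewrite Hx, Hy in H; lra.
  - pose proof (Rsqr_pos_lt _ Hy); unfold Rsqr in *; nra.
  - pose proof (Rsqr_pos_lt _ Hx); unfold Rsqr in *; nra.
Qed.

Lemma collinear_scale (u v : point) : cross u v = 0 -> 0 < dot u u ->
  fst v = dot u v / dot u u * fst u /\ snd v = dot u v / dot u u * snd u.
Proof.
  intros Hc Hu.
  assert (Hx : dot u u * fst v - dot u v * fst u = - snd u * cross u v)
    by (unfold dot, cross; ring).
  assert (Hy : dot u u * snd v - dot u v * snd u = fst u * cross u v)
    by (unfold dot, cross; ring).
  rewrite Hc, Rmult_0_r in Hx, Hy.
  split; field_simplify_eq; lra.
Qed.

Lemma on_segment_of_collinear (a b p : point) :
  orient a b p = 0 -> 0 < dot (vsub b a) (vsub b a) ->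
  0 <= dot (vsub b a) (vsub p a) <= dot (vsub b a) (vsub b a) ->
  on_segment a b p.
Proof.
  intros Hc Hab Hp.
  destruct (collinear_scale (vsub b a) (vsub p a) Hc Hab) as [Hx Hy].
  set (t := dot (vsub b a) (vsub p a) / dot (vsub b a) (vsub b a)) in *.
  assert (Ht : t * dot (vsub b a) (vsub b a) = dot (vsub b a) (vsub p a))
    by (unfold t; field; lra).
  exists t; split.
  - split; nra.
  - destruct p as [x y]; cbn [vsub fst snd] in *; f_equal; lra.
Qed.

Lemma outward_normal_scale (a b c d : point) (k : R) : 0 < k ->
  0 < dot (vsub b a) (vsub b a) ->
  fst d - fst c = k * (fst b - fst a) -> snd d - snd c = k * (snd b - snd a) ->
  outward_normal c d = outward_normal a b.
Proof.
  unfold dot, outward_normal; cbn [vsub fst snd]; intros Hk Hp H1 H2.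
  rewrite H1, H2.
  set (dx := fst b - fst a) in *; set (dy := snd b - snd a) in *.
  replace (k * dx * (k * dx) + k * dy * (k * dy)) with (k * k * (dx * dx + dy * dy))
    by ring.
  rewrite sqrt_mult_alt, sqrt_square by nra.
  assert (0 < sqrt (dx * dx + dy * dy)) by (apply sqrt_lt_R0; lra).
  f_equal; field; lra.
Qed.

Lemma outward_normal_parallel (a b c d : point) :
  cross (vsub b a) (vsub d c) = 0 -> 0 < dot (vsub b a) (vsub d c) ->
  outward_normal c d = outward_normal a b.
Proof.
  intros Hc Hd.
  pose proof (dot_self_pos _ _ Hd) as Hab.
  destruct (collinear_scale _ _ Hc Hab) as [Hx Hy].
  apply (outward_normal_scale _ _ _ _ (dot (vsub b a) (vsub d c) / dot (vsub b a) (vsub b a)));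
    [apply Rdiv_lt_0_compat | | |]; auto.
Qed.

Lemma unit_vector_outward_normal (a b : point) :
  0 < dot (vsub b a) (vsub b a) -> unit_vector (outward_normal a b).
Proof.
  unfold dot, unit_vector, outward_normal; cbn [vsub fst snd]; intros Hp.
  set (dx := fst b - fst a) in *; set (dy := snd b - snd a) in *.
  assert (Hs : sqrt (dx * dx + dy * dy) * sqrt (dx * dx + dy * dy) = dx * dx + dy * dy)
    by (apply sqrt_sqrt; lra).
  assert (0 < sqrt (dx * dx + dy * dy)) by (apply sqrt_lt_R0; lra).
  field_simplify; [|lra].
  rewrite <- !Rsqr_pow2; unfold Rsqr; rewrite Hs; field; lra.
Qed.

Definition marks (m : marker) (e : point * point) : Prop :=
  on_segment (fst e) (snd e) (fst m) /\ snd m = outward_normal (fst e) (snd e).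

Lemma marks_of_parallel (p a b c d : point) :
  orient a b p = 0 ->
  0 <= dot (vsub b a) (vsub p a) <= dot (vsub b a) (vsub b a) ->
  cross (vsub b a) (vsub d c) = 0 -> 0 < dot (vsub b a) (vsub d c) ->
  marks (p, outward_normal c d) (a, b).
Proof.
  intros Hp Hpab Hc Hd; split; cbn [fst snd].
  - apply on_segment_of_collinear; [| apply (dot_self_pos _ _ Hd) |]; assumption.
  - exact (outward_normal_parallel _ _ _ _ Hc Hd).
Qed.

Record triangle : Type := Triangle { tri_a : point; tri_b : point; tri_c : point }.

Definition tri_poly (t : triangle) : list point := [tri_a t; tri_b t; tri_c t].

Definition tri_edges (t : triangle) : list (point * point) :=
  [(tri_a t, tri_b t); (tri_b t, tri_c t); (tri_c t, tri_a t)].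

Lemma in_triangle (t : triangle) (p : point) :
  in_polygon (tri_poly t) p <->
  0 <= orient (tri_a t) (tri_b t) p /\ 0 <= orient (tri_b t) (tri_c t) p /\
  0 <= orient (tri_c t) (tri_a t) p.
Proof.
  split.
  - intros H; repeat split; [apply (H 0%nat) | apply (H 1%nat) | apply (H 2%nat)];
      cbn; lia.
  - intros (H0 & H1 & H2) [|[|[|i]]] Hi; cbn in Hi; [exact H0 | exact H1 | exact H2 | lia].
Qed.

Lemma convex_triangle (t : triangle) :
  0 < orient (tri_a t) (tri_b t) (tri_c t) -> convex_polygon (tri_poly t).
Proof.
  destruct t as [a b c]; cbn [tri_a tri_b tri_c]; intros H.
  assert (orient b c a = orient a b c /\ orient c a b = orient a b c) as [Hb Hc]
    by (unfold orient; split; ring).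
  split; [cbn; lia|].
  intros [|[|[|i]]] [|[|[|j]]] Hi Hj Hji Hjn; cbn in *;
    solve [lia | lra | exfalso; apply Hjn; reflexivity].
Qed.

Lemma on_aligned_edge_triangle (t : triangle) (m : marker) (i : nat) :
  (i < 3)%nat -> marks m (nth i (tri_edges t) (tri_a t, tri_a t)) ->
  on_aligned_edge m (tri_poly t) i.
Proof.
  intros Hi Hm; split; [exact Hi|].
  destruct i as [|[|[|i]]]; [exact Hm | exact Hm | exact Hm | lia].
Qed.

Definition tri_disjoint (t u : triangle) : Prop :=
  forall p, in_polygon (tri_poly t) p -> in_polygon (tri_poly u) p -> False.

Lemma disjoint_convex_family_triangles (T : list triangle) :
  Forall (fun t => 0 < orient (tri_a t) (tri_b t) (tri_c t)) T ->
  ForallOrdPairs tri_disjoint T ->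
  disjoint_convex_family (map tri_poly T).
Proof.
  intros Hconv Hdisj; split.
  - intros P HP; apply in_map_iff in HP as (t & <- & Ht).
    apply convex_triangle; exact (proj1 (Forall_forall _ _) Hconv t Ht).
  - intros P Q HP HQ [p [HPp HQp]].
    apply in_map_iff in HP as (t & <- & Ht); apply in_map_iff in HQ as (u & <- & Hu).
    destruct (ForallOrdPairs_In Hdisj t u Ht Hu) as [<- | [Htu | Hut]].
    + intros q; reflexivity.
    + destruct (Htu p HPp HQp).
    + destruct (Hut p HQp HPp).
Qed.

Lemma fully_consistent_triangles (T : list triangle) (M : list marker) :
  Forall (fun m => Exists (fun t => Exists (marks m) (tri_edges t)) T) M ->
  Forall (fun t => Forall (fun e => Exists (fun m => marks m e) M) (tri_edges t)) T ->
  fully_consistent (map tri_poly T) M.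
Proof.
  intros HM HT; split.
  - intros m Hm.
    pose proof (proj1 (Forall_forall _ _) HM m Hm) as He.
    apply Exists_exists in He as (t & Ht & He).
    apply Exists_exists in He as (e & Hin & Hme).
    apply (In_nth _ _ (tri_a t, tri_a t)) in Hin as (i & Hi & <-).
    exists (tri_poly t), i; split; [apply in_map; exact Ht|].
    apply on_aligned_edge_triangle; assumption.
  - intros P i HP Hi; apply in_map_iff in HP as (t & <- & Ht).
    set (e := nth i (tri_edges t) (tri_a t, tri_a t)).
    assert (He : In e (tri_edges t)) by (apply nth_In; exact Hi).
    pose proof (proj1 (Forall_forall _ _) HT t Ht) as Hedges.
    pose proof (proj1 (Forall_forall _ _) Hedges e He) as Hcover.
    apply Exists_exists in Hcover as (m & Hm & Hme).
    exists m; split; [exact Hm | apply on_aligned_edge_triangle; assumption].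
Qed.

Lemma not_same_family_of_witness (S S' : list (list point)) (P : list point) (p : point) :
  In P S -> in_polygon P p -> (forall Q, In Q S' -> ~ in_polygon Q p) ->
  ~ same_family S S'.
Proof.
  intros HP Hp Hout [HS _].
  destruct (HS P HP) as (Q & HQ & HPQ).
  exact (Hout Q HQ (proj1 (HPQ p) Hp)).
Qed.

Definition family_A : list triangle :=
  [Triangle (-440, 400) (-340, 250) (60, 150);
   Triangle (-120, -560) (-60, -420) (-196, 124);
   Triangle (560, 160) (400, 160) (0, -240)].

Definition family_B : list triangle :=
  [Triangle (-440, 400) (-160, -20) (-240, 300);
   Triangle (-120, -560) (30, -210) (-140, -380);
   Triangle (560, 160) (20, 160) (420, 60)].

Definition markers : list marker :=
  [((-390, 325), outward_normal (-440, 400) (-340, 250));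
   ((40, 155), outward_normal (-340, 250) (60, 150));
   ((-340, 350), outward_normal (60, 150) (-440, 400));
   ((-90, -490), outward_normal (-120, -560) (-60, -420));
   ((-178, 52), outward_normal (-60, -420) (-196, 124));
   ((-130, -470), outward_normal (-196, 124) (-120, -560));
   ((480, 160), outward_normal (560, 160) (400, 160));
   ((15, -225), outward_normal (400, 160) (0, -240));
   ((490, 110), outward_normal (0, -240) (560, 160))].

Ltac coords :=
  unfold orient, dot, cross, vsub in *; cbn [tri_a tri_b tri_c fst snd] in *.

Ltac solve_marks := solve [apply marks_of_parallel; coords; lra].

Ltac solve_exists tac :=
  first [apply Exists_cons_hd; tac | apply Exists_cons_tl; solve_exists tac].

Ltac solve_tri_disjoint :=
  let Hp := fresh in let Hq := fresh in
  intros ? Hp Hq; apply in_triangle in Hp, Hq; coords; lra.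

Ltac split_forall :=
  repeat first [apply Forall_nil | apply Forall_cons | apply FOP_nil | apply FOP_cons].

Ltac solve_family :=
  apply disjoint_convex_family_triangles; split_forall;
  first [coords; lra | solve_tri_disjoint].

Ltac solve_fully_consistent :=
  apply fully_consistent_triangles; split_forall;
  first [solve_exists ltac:(solve_exists solve_marks) | solve_exists solve_marks].

Lemma family_A_disjoint_convex : disjoint_convex_family (map tri_poly family_A).
Proof. solve_family. Qed.

Lemma family_B_disjoint_convex : disjoint_convex_family (map tri_poly family_B).
Proof. solve_family. Qed.

Lemma family_A_fully_consistent : fully_consistent (map tri_poly family_A) markers.
Proof. solve_fully_consistent. Qed.

Lemma family_B_fully_consistent : fully_consistent (map tri_poly family_B) markers.
Proof. solve_fully_consistent. Qed.

Lemma families_differ : ~ same_family (map tri_poly family_A) (map tri_poly family_B).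
Proof.
  apply (not_same_family_of_witness _ _
           (tri_poly (Triangle (-440, 400) (-340, 250) (60, 150))) (-230, 270)).
  - left; reflexivity.
  - apply in_triangle; coords; lra.
  - intros Q HQ Hin; cbn [map family_B In] in HQ.
    destruct HQ as [<- | [<- | [<- | []]]]; apply in_triangle in Hin;
      coords; lra.
Qed.

Lemma markers_unit : forall m, In m markers -> unit_vector (snd m).
Proof.
  apply Forall_forall; repeat constructor;
    apply unit_vector_outward_normal; coords; lra.
Qed.

Theorem mainTheorem15 :
  exists (S S' : list (list point)) (M : list marker),
    disjoint_convex_family S /\ disjoint_convex_family S' /\
    ~ same_family S S' /\
    (forall m, In m M -> unit_vector (snd m)) /\
    fully_consistent S M /\ fully_consistent S' M.
Proof.
  exists (map tri_poly family_A), (map tri_poly family_B), markers.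
  exact (conj family_A_disjoint_convex (conj family_B_disjoint_convex
           (conj families_differ (conj markers_unit
           (conj family_A_fully_consistent family_B_fully_consistent))))).
Qed.
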